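(* Let $2\le p<\infty$. There exists a constant $c=c(p)>0$ such that for every $\xi,\eta\in\mathbb{R}^n\setminus\{0\}$, $$\langle H_{p-1}(\xi)-H_{p-1}(\eta),\xi-\eta\rangle \;\ge\; c(p)\left[\frac{(|\xi|-1)_+^{p}}{|\xi|^2}+\frac{(|\eta|-1)_+^{p}}{|\eta|^2}\right]|\xi-\eta|^2 .$$
   Context: For $\gamma>0$, $H_\gamma:\mathbb{R}^n\to\mathbb{R}^n$ is defined by $H_\gamma(\xi)=(|\xi|-1)_+^{\gamma}\,\frac{\xi}{|\xi|}$ for $\xi\neq 0$ and $H_\gamma(0)=0$, where $(s)_+=\max\{s,0\}$ and $\langle\cdot,\cdot\rangle$ is the Euclidean inner product. *)

From HB Require Import structures.
From mathcomp Require Import all_boot all_order all_algebra.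
From mathcomp Require Import all_classical all_reals all_analysis.
Set Implicit Arguments. Unset Strict Implicit. Unset Printing Implicit Defensive.
Import Order.TTheory GRing.Theory Num.Theory.
Local Open Scope ring_scope.

Definition dotv (R : realType) (n : nat) (u v : 'rV[R]_n) : R :=
  \sum_(i < n) u 0 i * v 0 i.

Definition enorm (R : realType) (n : nat) (u : 'rV[R]_n) : R :=
  Num.sqrt (dotv u u).

Definition pos_part (R : realType) (s : R) : R := Num.max s 0.

Definition Hgam (R : realType) (gamma : R) (n : nat) (xi : 'rV[R]_n) : 'rV[R]_n :=
  if xi == 0 then 0
  else (powR (pos_part (enorm xi - 1)) gamma / enorm xi) *: xi.

(* Writing s = F(|xi|) and t = F(|eta|) with F(a) = (a-1)_+^(p-1)/a, we have
   H_(p-1)(xi) = s xi, and the polarization identity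
   <s xi - t eta, xi - eta> = (s+t)/2 |xi-eta|^2 + (s-t)(|xi|^2-|eta|^2)/2.
   Since F is nondecreasing for p >= 2 the second term is nonnegative, and
   (a-1)_+^p / a^2 <= F(a) because (a-1)_+ <= a; so c(p) = 1/2 works. *)
From HB Require Import structures.
From mathcomp Require Import all_boot all_order all_algebra.
From mathcomp Require Import all_classical all_reals all_analysis.
From mathcomp Require Import ring lra.
Set Implicit Arguments. Unset Strict Implicit. Unset Printing Implicit Defensive.
Import Order.TTheory GRing.Theory Num.Theory.
Local Open Scope ring_scope.

Section InnerProduct.
Variables (R : realType) (n : nat).
Implicit Types (u v w : 'rV[R]_n).

Lemma dotvC u v : dotv u v = dotv v u.
Proof. by apply: eq_bigr => i _; rewrite mulrC. Qed.

Lemma dotvBl u v w : dotv (u - v) w = dotv u w - dotv v w.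
Proof. by rewrite /dotv -sumrB; apply: eq_bigr => i _; rewrite !mxE mulrBl. Qed.

Lemma dotvBr u v w : dotv w (u - v) = dotv w u - dotv w v.
Proof. by rewrite dotvC dotvBl !(dotvC _ w). Qed.

Lemma dotvZl a u w : dotv (a *: u) w = a * dotv u w.
Proof. by rewrite /dotv mulr_sumr; apply: eq_bigr => i _; rewrite !mxE mulrA. Qed.

Lemma dotvv_ge0 u : 0 <= dotv u u.
Proof. by apply: sumr_ge0 => i _; rewrite -expr2 sqr_ge0. Qed.

Lemma enorm_ge0 u : 0 <= enorm u.
Proof. exact: sqrtr_ge0. Qed.

Lemma enorm_sqr u : enorm u ^+ 2 = dotv u u.
Proof. by rewrite /enorm sqr_sqrtr // dotvv_ge0. Qed.

Lemma dotv_radial (s t : R) (xi eta : 'rV[R]_n) :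
  dotv (s *: xi - t *: eta) (xi - eta)
  = (s + t) / 2 * enorm (xi - eta) ^+ 2
    + (s - t) * (enorm xi ^+ 2 - enorm eta ^+ 2) / 2.
Proof.
by rewrite !enorm_sqr !dotvBl !dotvZl !dotvBr (dotvC eta xi); field.
Qed.

Lemma dotv_radial_ge (f : R -> R) (xi eta : 'rV[R]_n) :
  (forall a b, 0 <= b -> b <= a -> f b <= f a) ->
  (f (enorm xi) + f (enorm eta)) / 2 * enorm (xi - eta) ^+ 2
  <= dotv (f (enorm xi) *: xi - f (enorm eta) *: eta) (xi - eta).
Proof.
move=> f_mono; rewrite dotv_radial lerDl.
have hxi := enorm_ge0 xi; have heta := enorm_ge0 eta.
rewrite divr_ge0 // subr_sqr mulrA.
have [le_eta_xi | lt_xi_eta] := lerP (enorm eta) (enorm xi).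
  by rewrite mulr_ge0 ?addr_ge0 // mulr_ge0 // subr_ge0 // f_mono.
by rewrite mulr_ge0 ?addr_ge0 // mulr_le0 // subr_le0 ?f_mono // ltW.
Qed.

End InnerProduct.

Section RadialWeight.
Variable R : realType.

Definition radial_weight (g a : R) : R := powR (pos_part (a - 1)) g / a.

Lemma Hgam_radial g n (xi : 'rV[R]_n) :
  xi != 0 -> Hgam g xi = radial_weight g (enorm xi) *: xi.
Proof. by rewrite /Hgam => /negbTE ->. Qed.

Lemma radial_weight_ge0 g a : 0 <= a -> 0 <= radial_weight g a.
Proof. by move=> a_ge0; rewrite divr_ge0 // powR_ge0. Qed.

(* Both factors are nonnegative and nondecreasing in a. *)
Lemma radial_weight_gt1 g a : 0 < g -> 1 < a ->
  radial_weight g a = powR (a - 1) (g - 1) * (1 - a^-1).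
Proof.
move=> g_gt0 a_gt1; have a_neq0 : a != 0 by rewrite gt_eqF // (lt_trans ltr01).
rewrite /radial_weight /pos_part max_l ?subr_ge0 ?ltW //.
by rewrite -(mulr_powRB1 _ g_gt0) ?subr_ge0 ?ltW //; field.
Qed.

Lemma radial_weight_nondecreasing g a b : 1 <= g -> 0 <= b -> b <= a ->
  radial_weight g b <= radial_weight g a.
Proof.
move=> g_ge1 b_ge0 le_ba; have a_ge0 := le_trans b_ge0 le_ba.
have g_gt0 : 0 < g by lra.
have [b_le1 | b_gt1] := lerP b 1.
  rewrite [X in X <= _]/radial_weight /pos_part max_r ?subr_le0 //.
  by rewrite powR0 ?gt_eqF // mul0r radial_weight_ge0.
have a_gt1 := lt_le_trans b_gt1 le_ba.
rewrite !radial_weight_gt1 //; apply: ler_pM.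
- exact: powR_ge0.
- by rewrite subr_ge0 invf_le1 ?ltW // (lt_trans ltr01).
- by apply: ge0_ler_powR; rewrite ?nnegrE ?subr_ge0 ?lerD2r // ltW.
- by rewrite lerD2l lerN2 lef_pV2 // posrE (lt_trans ltr01).
Qed.

(* Uses (a-1)_+ <= a to trade one power of (a-1)_+ for a factor a. *)
Lemma powR_pos_part_div_sqr_le p a : 1 <= p -> 0 <= a ->
  powR (pos_part (a - 1)) p / a ^+ 2 <= radial_weight (p - 1) a.
Proof.
move=> p_ge1 a_ge0; set u := pos_part (a - 1).
have u_ge0 : 0 <= u by rewrite le_max lexx orbT.
have le_ua : u <= a by rewrite ge_max a_ge0 andbT; lra.
rewrite /radial_weight -/u -(mulr_powRB1 u_ge0) ?(lt_le_trans ltr01) //.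
have [-> | a_neq0] := eqVneq a 0; first by rewrite expr0n /= invr0 !mulr0.
have -> : u * powR u (p - 1) / a ^+ 2 = u / a * (powR u (p - 1) / a) by field.
rewrite -[X in _ <= X]mul1r ler_wpM2r ?divr_ge0 ?powR_ge0 //.
by rewrite ler_pdivrMr ?mul1r // lt_neqAle eq_sym a_neq0.
Qed.

End RadialWeight.

Theorem lemma2p4 (R : realType) (p : R) :
  2 <= p ->
  exists c : R, 0 < c /\
    forall (n : nat) (xi eta : 'rV[R]_n), xi != 0 -> eta != 0 ->
      c * (powR (pos_part (enorm xi - 1)) p / (enorm xi) ^+ 2
           + powR (pos_part (enorm eta - 1)) p / (enorm eta) ^+ 2)
        * (enorm (xi - eta)) ^+ 2
      <= dotv (Hgam (p - 1) xi - Hgam (p - 1) eta) (xi - eta).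
Proof.
move=> p_ge2; exists (1 / 2); split=> // n xi eta xi_neq0 eta_neq0.
have p_ge1 : 1 <= p by lra.
have w_mono : forall a b, 0 <= b -> b <= a ->
    radial_weight (p - 1) b <= radial_weight (p - 1) a.
  by move=> a b; apply: radial_weight_nondecreasing; lra.
rewrite !Hgam_radial //; apply: le_trans (dotv_radial_ge _ _ w_mono).
rewrite mul1r mulrC [X in _ <= X]mulrC ler_wpM2l ?sqr_ge0 //.
rewrite [X in _ <= X]mulrC ler_wpM2l ?invr_ge0 ?ler0n //.
by apply: lerD; apply: powR_pos_part_div_sqr_le; rewrite ?enorm_ge0.
Qed.
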